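(* Let $p$ be an odd prime and let $B$ be the $p\times p$ matrix over $\mathbb{F}_p$ with rows and columns indexed by $0,1,\dots,p-1$, defined by $B(s,s)=0$ and $B(s,t)=(s-t)^{-1}$ for $s\neq t$. Then $\operatorname{rank}(B)=p-1$. *)

From mathcomp Require Import all_boot all_algebra.
Set Implicit Arguments. Unset Strict Implicit. Unset Printing Implicit Defensive.
Import GRing.Theory.
Local Open Scope ring_scope.

Definition Bmx (p : nat) : 'M['F_p]_p :=
  \matrix_(s < p, t < p)
     (if s == t then 0 else ((s : nat)%:R - (t : nat)%:R)^-1).

(* The all-ones row vector lies in the left kernel of B: the inverses of the
   elements of F_p sum to zero, since x^-1 and (-x)^-1 cancel for p odd.
   Conversely, as x^-1 = x^(p-2) in F_p, a left kernel vector u makes the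
   polynomial sum_s u_s (s - X)^(p-2), of degree at most p-2, vanish at all p
   points of F_p, so it is zero; the binomial coefficients C(p-2, k) being units
   mod p, the power sums sum_s u_s s^j vanish for j <= p-2. Expanding
   sum_s u_s (s - r)^(p-1), which Fermat's little theorem turns into
   sum_(s != r) u_s, then gives u_r = - sum_s u_s s^(p-1) for every r, so the
   left kernel is the line of constant vectors. *)

From mathcomp Require Import all_boot all_algebra.
From mathcomp Require Import all_field ring zify.

Set Implicit Arguments. Unset Strict Implicit. Unset Printing Implicit Defensive.
Import GRing.Theory.
Local Open Scope ring_scope.

Section WeightedPowerSums.

Variables (F : fieldType) (I : finType) (a u : I -> F).

Definition power_sum j := \sum_i u i * a i ^+ j.

Lemma power_sum0 : power_sum 0 = \sum_i u i.
Proof. by apply: eq_bigr => i _; rewrite expr0 mulr1. Qed.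

Lemma shifted_power_sumE m x :
  \sum_i u i * (a i - x) ^+ m =
  \sum_(k < m.+1) (- x) ^+ k *+ 'C(m, k) * power_sum (m - k).
Proof.
under eq_bigr do rewrite exprDn mulr_sumr.
rewrite exchange_big /=; apply: eq_bigr => k _.
rewrite mulr_sumr; apply: eq_bigr => i _; rewrite !mulrnAl; ring.
Qed.

Lemma shifted_power_sum_const m x :
  (forall j, (j < m)%N -> power_sum j = 0) ->
  \sum_i u i * (a i - x) ^+ m = power_sum m.
Proof.
move=> lower0; rewrite shifted_power_sumE big_ord_recl big1 => [|k _].
  by rewrite expr0 bin0 subn0 mul1r addr0.
by rewrite lower0 ?mulr0 // subnSK ?leq_subr.
Qed.

Lemma power_sums_eq0 m : injective a -> (m < #|I|)%N -> (m`!%:R : F) != 0 ->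
  (forall t, \sum_i u i * (a i - a t) ^+ m = 0) ->
  forall j, (j <= m)%N -> power_sum j = 0.
Proof.
move=> a_inj m_lt fact_neq0 shifted0 j le_jm.
pose q : {poly F} := \poly_(k < m.+1) ((-1) ^+ k *+ 'C(m, k) * power_sum (m - k)).
have qE x : q.[x] = \sum_i u i * (a i - x) ^+ m.
  rewrite horner_poly shifted_power_sumE; apply: eq_bigr => k _.
  by rewrite (exprNn x) -!mulrnAl -!mulrA; congr (_ * _); exact: mulrC.
have q0 : q = 0.
  apply: (@roots_geq_poly_eq0 _ _ (map a (enum I))).
  - by apply/allP => _ /mapP [t _ ->]; rewrite /root qE shifted0.
  - by rewrite map_inj_uniq ?enum_uniq.
  - by rewrite size_map -cardE (leq_trans (size_poly _ _)).
have bin_neq0 : ('C(m, m - j)%:R : F) != 0.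
  apply: contraNneq fact_neq0 => bin0.
  by rewrite -(bin_fact (leq_subr j m)) !natrM bin0 !mul0r.
have := congr1 (fun r : {poly F} => r`_(m - j)) q0.
rewrite coef_poly coef0 ltnS leq_subr subKn // => /eqP.
by rewrite -mulr_natr mulrAC !mulf_eq0 signr_eq0 (negPf bin_neq0) orbF => /eqP.
Qed.

End WeightedPowerSums.

Section FiniteField.

Variable F : finFieldType.

Lemma expf_card_pred (x : F) : x != 0 -> x ^+ #|F|.-1 = 1.
Proof.
move=> x_neq0; apply: (mulIf x_neq0).
by rewrite mul1r -exprSr (ltn_predK (finNzRing_gt1 F)); apply: expf_card.
Qed.

Lemma invf_expr_card (x : F) : (2 < #|F|)%N -> x^-1 = x ^+ #|F|.-2.
Proof.
move=> F_gt2; have [->|x_neq0] := eqVneq x 0.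
  by rewrite invr0 expr0n; case: #|F| F_gt2 => [|[|[|]]].
apply: (mulIf x_neq0); rewrite mulVf // -exprSr.
have -> : #|F|.-2.+1 = #|F|.-1 by case: #|F| F_gt2 => [|[|[|]]].
by rewrite expf_card_pred.
Qed.

Lemma sum_invf_subr (b : F) : 2%:R != 0 :> F -> \sum_x (x - b)^-1 = 0.
Proof.
move=> two_neq0; rewrite (reindex_inj (addIr b)) /=.
under eq_bigr do rewrite addrK.
set S := \sum_x _; have S_opp : S = - S.
  rewrite [LHS](reindex_inj oppr_inj) /= -sumrN.
  by apply: eq_bigr => x _; rewrite invrN.
have /eqP : S * 2%:R = 0 by rewrite mulr_natr mulr2n {1}S_opp addNr.
by rewrite mulf_eq0 (negPf two_neq0) orbF => /eqP.
Qed.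

Lemma shifted_power_sum_card_pred (I : finType) (a u : I -> F) r :
  injective a -> \sum_i u i * (a i - a r) ^+ #|F|.-1 = \sum_i u i - u r.
Proof.
move=> a_inj; rewrite (bigD1 r) //= [in RHS](bigD1 r) //= subrr expr0n.
have -> : (#|F|.-1 == 0%N) = false by rewrite -subn1 subn_eq0 leqNgt finNzRing_gt1.
rewrite mulr0 add0r addrAC subrr add0r.
apply: eq_bigr => i ne_ir; rewrite expf_card_pred ?mulr1 // subr_eq0.
by apply: contra ne_ir => /eqP/a_inj ->.
Qed.

End FiniteField.

Section PrimeField.

Variables (p : nat) (p_pr : prime p) (p_odd : odd p).

Let p_gt2 : (2 < p)%N.
Proof. by have := prime_gt1 p_pr; case: p p_odd => [|[|[|]]]. Qed.

Local Notation ones := (const_mx 1 : 'rV['F_p]_p).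

Definition Fp_of_ord (s : 'I_p) : 'F_p := (s : nat)%:R.

Lemma Fp_of_ord_inj : injective Fp_of_ord.
Proof.
move=> s t /(congr1 (@nat_of_ord _)); rewrite /Fp_of_ord !val_Fp_nat // !modn_small //.
exact: val_inj.
Qed.

Lemma sum_Fp_of_ord (f : 'F_p -> 'F_p) : \sum_(s < p) f (Fp_of_ord s) = \sum_x f x.
Proof.
have [g g_K K_g] : bijective Fp_of_ord.
  by apply: (inj_card_bij Fp_of_ord_inj); rewrite card_Fp // card_ord.
by rewrite [RHS](reindex Fp_of_ord) //; exists g.
Qed.

Lemma natr_Fp_neq0 n : (0 < n < p)%N -> (n%:R : 'F_p) != 0.
Proof. by case/andP=> n_gt0 n_lt; rewrite -(dvdn_pcharf (pchar_Fp p_pr)) gtnNdvd. Qed.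

Lemma fact_Fp_neq0 n : (n < p)%N -> (n`!%:R : 'F_p) != 0.
Proof.
elim: n => [|n IHn] n_lt; first by rewrite oner_neq0.
by rewrite factS natrM mulf_neq0 ?(IHn (ltnW n_lt)) ?natr_Fp_neq0.
Qed.

Lemma Bmx_E s t : Bmx p s t = (Fp_of_ord s - Fp_of_ord t)^-1.
Proof. by rewrite mxE; case: eqP => [->|//]; rewrite subrr invr0. Qed.

Lemma Bmx_ones : ones *m Bmx p = 0.
Proof.
apply/rowP => t; rewrite !mxE.
under eq_bigr do rewrite mxE mul1r Bmx_E.
rewrite (sum_Fp_of_ord (fun x => (x - Fp_of_ord t)^-1)) sum_invf_subr //.
by rewrite natr_Fp_neq0 ?p_gt2.
Qed.

Lemma Bmx_left_kernel (u : 'rV['F_p]_p) : u *m Bmx p = 0 -> (u <= ones)%MS.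
Proof.
move=> uB0; pose w s : 'F_p := u 0 s.
have shifted0 t : \sum_s w s * (Fp_of_ord s - Fp_of_ord t) ^+ p.-2 = 0.
  have := congr1 (fun v : 'rV_p => v 0 t) uB0; rewrite !mxE => uBt; rewrite -[RHS]uBt.
  by apply: eq_bigr => s _; rewrite Bmx_E invf_expr_card card_Fp.
have low0 : forall j, (j <= p.-2)%N -> power_sum Fp_of_ord w j = 0.
  by apply: power_sums_eq0 Fp_of_ord_inj _ _ shifted0; rewrite ?card_ord ?fact_Fp_neq0 //; lia.
apply/sub_rVP; exists (- power_sum Fp_of_ord w p.-1); apply/rowP => r.
rewrite !mxE mulr1.
have := shifted_power_sum_card_pred w r Fp_of_ord_inj.
rewrite card_Fp // shifted_power_sum_const => [|j j_lt]; last first.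
  by apply: low0; lia.
by rewrite -(power_sum0 Fp_of_ord) low0 // sub0r => ->; rewrite opprK.
Qed.

Lemma kermx_Bmx : (kermx (Bmx p) == ones)%MS.
Proof.
apply/andP; split; last exact/sub_kermxP/Bmx_ones.
apply/row_subP => i; apply: Bmx_left_kernel.
by rewrite -row_mul mulmx_ker row0.
Qed.

End PrimeField.

Theorem lemma2p11 (p : nat) (hp : prime p) (hodd : odd p) :
  \rank (Bmx p) = p.-1.
Proof.
have := mxrank_ker (Bmx p); rewrite (eqmx_rank (kermx_Bmx hp hodd)) rank_rV.
have -> : const_mx 1 != 0 :> 'rV['F_p]_p.
  apply/eqP => /rowP /(_ (Ordinal (prime_gt0 hp))) /eqP.
  by rewrite !mxE oner_eq0.
by have := rank_leq_row (Bmx p); lia.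
Qed.
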